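(* Let $\mathcal G_1,\mathcal G_2$ be finite graphs. Suppose there exist $\beta_1,\beta_2\in(0,\infty)$ such that \[ \lim_{n\to\infty}\frac{\log s_n(W(\mathcal G_i))}{n\log n}=\beta_i \quad\text{for } i=1,2 . \] Then \[ \lim_{n\to\infty}\frac{\log s_n(W(\mathcal G_1\star\mathcal G_2))}{n\log n}=\max\{\beta_1,\beta_2\}. \] Furthermore, if at least one of $\mathcal G_1,\mathcal G_2$ is not complete, then \[ \gamma(\mathcal G_1\star\mathcal G_2)=\max(\gamma(\mathcal G_1),\gamma(\mathcal G_2)). \]
   Context: Graphs are finite simple graphs. $W(\mathcal G)$ is the right-angled Coxeter group \[ \langle \sigma_v,\ v\in\mathcal G\mid \sigma_v^2=1,\ \sigma_v\sigma_w=\sigma_w\sigma_v \text{ for adjacent } v,w\rangle . \] $s_n(\Gamma)$ is the number of subgroups of index exactly $n$ in $\Gamma$. The join $\mathcal G_1\star\mathcal G_2$ is the graph on the disjoint union of the vertex sets. Two vertices in the same $\mathcal G_i$ are adjacent iff they are adjacent in $\mathcal G_i$, and any two vertices in different $\mathcal G_i$ are adjacent. In particular $W(\mathcal G_1\star\mathcal G_2)=W(\mathcal G_1)\times W(\mathcal G_2)$. A clique collection is an induced subgraph whose connected components are complete graphs. For a clique collection $\mathcal C$ with components $\mathcal C_1,\dots,\mathcal C_q$, set $w(\mathcal C)=\sum_i(1-2^{-|\mathcal C_i|})$. Then $\gamma(\mathcal G)$ is the maximum of $w(\mathcal C)$ over all clique collections $\mathcal C$ of $\mathcal G$. *)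

From HB Require Import structures.
From mathcomp Require Import all_boot all_order all_algebra.
From mathcomp Require Import all_classical all_reals all_analysis.
Set Implicit Arguments. Unset Strict Implicit. Unset Printing Implicit Defensive.
Import Order.TTheory GRing.Theory Num.Theory.
Local Open Scope classical_set_scope.
Local Open Scope ring_scope.

Definition simple_graph (V : finType) (e : rel V) : Prop :=
  symmetric e /\ irreflexive e.

Definition complete_graph (V : finType) (e : rel V) : Prop :=
  forall x y : V, x != y -> e x y.

Definition join_rel (V1 V2 : finType) (e1 : rel V1) (e2 : rel V2) : rel (V1 + V2) :=
  fun a b => match a, b with
  | inl x, inl y => e1 x y
  | inr x, inr y => e2 x y
  | _, _ => true
  end.

(** The right-angled Coxeter group W(G), as words in the generators sigma_v
    (elements of seq V) modulo the congruence generated by the defining relations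
    sigma_v^2 = 1 and sigma_v sigma_w = sigma_w sigma_v for adjacent v, w. *)
Inductive raag_eq (V : finType) (e : rel V) : seq V -> seq V -> Prop :=
| req_refl u : raag_eq e u u
| req_sym u v : raag_eq e u v -> raag_eq e v u
| req_trans u v w : raag_eq e u v -> raag_eq e v w -> raag_eq e u w
| req_sq (u w : seq V) (v : V) : raag_eq e (u ++ v :: v :: w) (u ++ w)
| req_comm (u w : seq V) (v x : V) : e v x ->
    raag_eq e (u ++ v :: x :: w) (u ++ x :: v :: w).

(** Subgroups of W(G), represented as the set of words representing their
    elements (saturated for raag_eq). Multiplication is concatenation, and the
    inverse of a word is its reverse (the generators are involutions). *)
Definition is_subgroup (V : finType) (e : rel V) (H : set (seq V)) : Prop :=
  [/\ H [::],
      (forall u v, raag_eq e u v -> H u -> H v),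
      (forall u v, H u -> H v -> H (u ++ v)) &
      (forall u, H u -> H (rev u))].

(** H has index exactly n: the left cosets uH (uH = vH iff u^-1 v in H)
    are in bijection with 'I_n. *)
Definition has_index (V : finType) (e : rel V) (H : set (seq V)) (n : nat) : Prop :=
  exists f : seq V -> 'I_n,
    (forall i : 'I_n, exists u, f u = i) /\
    (forall u v, f u = f v <-> H (rev u ++ v)).

Definition subgroups_of_index (V : finType) (e : rel V) (n : nat) : set (set (seq V)) :=
  [set H | is_subgroup e H /\ has_index e H n].

(** s_n(W(G)) : the number of subgroups of index exactly n
    (the cardinal k with subgroups_of_index #= `I_k; 0 if there is none). *)
Definition s_n (V : finType) (e : rel V) (n : nat) : nat :=
  xget 0%N [set k | (subgroups_of_index e n #= `I_k)%card].

Definition induced_rel (V : finType) (e : rel V) (S : {set V}) : rel V :=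
  fun x y => [&& x \in S, y \in S & e x y].

Definition component (V : finType) (e : rel V) (S : {set V}) (x : V) : {set V} :=
  [set y in S | connect (induced_rel e S) x y].

Definition components (V : finType) (e : rel V) (S : {set V}) : {set {set V}} :=
  [set component e S x | x in S].

Definition clique_collection (V : finType) (e : rel V) (S : {set V}) : bool :=
  [forall C in components e S, forall x in C, forall y in C, (x != y) ==> e x y].

Definition weight (R : realType) (V : finType) (e : rel V) (S : {set V}) : R :=
  \sum_(C in components e S) (1 - (2%:R : R) ^- #|C|).

Definition gamma (R : realType) (V : finType) (e : rel V) : R :=
  \big[Num.max/0]_(S : {set V} | clique_collection e S) weight R e S.

(* W(G1 * G2) is the direct product W(G1) x W(G2).  Each W(Gi) is a retract of
   the product, and pulling subgroups back along the retraction preserves the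
   index, so s_n(W(Gi)) <= s_n(W(G1 * G2)).  Conversely, a subgroup H of index n
   of the product is determined by A = H meet W(G1), of some index i, by the
   projection K of H to W(G2), of index k = n / i, and by the cosets modulo A of
   lifts to H of the k |V(G2)| Schreier generators of K.  Hence
   s_n(W) <= sum_(ik = n) s_i(W1) s_k(W2) i^(k |V(G2)|), whose logarithm is at
   most (max(b1, b2) + o(1)) n log n.
   For gamma: a clique collection of the join meeting both sides is connected,
   hence a single clique, of weight < 1; a non-complete side has two
   non-adjacent vertices, a clique collection of weight 1.  Clique collections
   inside one side have the same weight as in that side. *)

From mathcomp Require Import all_boot all_order all_algebra.
From mathcomp Require Import all_classical all_reals all_analysis.
From mathcomp.algebra_tactics Require Import ring lra.
From mathcomp Require Import zify.
Import Order.TTheory GRing.Theory Num.Theory numFieldNormedType.Exports.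
Set Implicit Arguments. Unset Strict Implicit. Unset Printing Implicit Defensive.
Local Open Scope classical_set_scope.
Local Open Scope ring_scope.

Section RaagWords.
Variables (V : finType) (e : rel V).
Local Notation req := (raag_eq e).

Lemma raag_eq_catl w u v : req u v -> req (w ++ u) (w ++ v).
Proof.
elim=> {u v} [u|u v _ IH|u v s _ IH1 _ IH2|u s x|u s x y exy].
- exact: req_refl.
- exact: req_sym.
- exact: req_trans IH2.
- by rewrite !catA; apply: req_sq.
- by rewrite !catA; apply: req_comm.
Qed.

Lemma raag_eq_catr w u v : req u v -> req (u ++ w) (v ++ w).
Proof.
elim=> {u v} [u|u v _ IH|u v s _ IH1 _ IH2|u s x|u s x y exy].
- exact: req_refl.
- exact: req_sym.
- exact: req_trans IH2.
- by rewrite -!catA; apply: req_sq.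
- by rewrite -!catA; apply: req_comm.
Qed.

Lemma raag_eq_revK u w : req (rev u ++ u ++ w) w.
Proof.
elim: u w => [|x u IH] w /=; first exact: req_refl.
rewrite rev_cons -cats1 -catA /=.
by apply: req_trans (IH w); apply: req_sq.
Qed.

Lemma raag_eq_catrevK u w : req (u ++ rev u ++ w) w.
Proof. by have := raag_eq_revK (rev u) w; rewrite revK. Qed.

Lemma raag_eq_pmap (W : finType) (e' : rel W) (p : V -> option W) u v :
  (forall x y, e x y ->
     match p x, p y with Some x', Some y' => e' x' y' | _, _ => true end) ->
  req u v -> raag_eq e' (pmap p u) (pmap p v).
Proof.
move=> p_adj; elim=> {u v} [u|u v _ IH|u v w _ IH1 _ IH2|u w x|u w x y exy].
- exact: req_refl.
- exact: req_sym.
- exact: req_trans IH2.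
- rewrite !pmap_cat /=; case: (p x) => [x'|] /=; last exact: req_refl.
  exact: req_sq.
- rewrite !pmap_cat /=; move: (p_adj _ _ exy).
  case: (p x) => [x'|]; case: (p y) => [y'|] //= exy'; try exact: req_refl.
  exact: req_comm.
Qed.

Lemma raag_eq_map (W : finType) (e' : rel W) (f : V -> W) u v :
  {homo f : x y / e x y >-> e' x y} -> req u v -> raag_eq e' (map f u) (map f v).
Proof.
have pmapE s : pmap (Some \o f) s = map f s by elim: s => //= x s ->.
by move=> f_adj /(@raag_eq_pmap _ e' (Some \o f)); rewrite !pmapE; apply.
Qed.

End RaagWords.

Section Subgroups.
Variables (V : finType) (e : rel V) (H : set (seq V)).
Hypothesis H_sub : is_subgroup e H.

Lemma subgroup1 : H [::]. Proof. by case: H_sub. Qed.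

Lemma subgroup_raag u v : raag_eq e u v -> H u -> H v.
Proof. by case: H_sub => _ + _ _; apply. Qed.

Lemma subgroup_raagE u v : raag_eq e u v -> H u = H v.
Proof. by move=> uv; apply/propext; split; apply: subgroup_raag => //; apply: req_sym. Qed.

Lemma subgroupM u v : H u -> H v -> H (u ++ v).
Proof. by case: H_sub => _ _ + _; apply. Qed.

Lemma subgroupV u : H u -> H (rev u).
Proof. by case: H_sub => _ _ _; apply. Qed.

End Subgroups.

Definition coset_map (V : Type) (H : set (seq V)) (n : nat) (f : seq V -> 'I_n) : Prop :=
  (forall i, exists u, f u = i) /\ (forall u v, f u = f v <-> H (rev u ++ v)).

Section CosetMaps.
Variables (V : finType) (e : rel V) (H : set (seq V)) (n : nat) (f : seq V -> 'I_n).
Hypotheses (H_sub : is_subgroup e H) (f_coset : coset_map H f).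

Lemma coset_map_nil u : f [::] = f u <-> H u.
Proof. by rewrite f_coset.2. Qed.

Lemma coset_map_raag u v : raag_eq e u v -> f u = f v.
Proof.
move=> uv; apply/f_coset.2; apply: (subgroup_raag H_sub _ (subgroup1 H_sub)).
apply: req_trans (req_sym (raag_eq_revK e u [::])) _; rewrite cats0.
exact: raag_eq_catl.
Qed.

Lemma coset_map_cons x u v : f u = f v -> f (x :: u) = f (x :: v).
Proof.
move=> /f_coset.2 Huv; apply/f_coset.2; apply: (subgroup_raag H_sub _ Huv).
by rewrite rev_cons -cats1 -catA; apply/req_sym/req_sq.
Qed.

End CosetMaps.

Section Counting.
Local Open Scope card_scope.

Lemma card_code_le (T : Type) (U : finType) (S : set T) (code : T -> U -> Prop) :
  (forall x, S x -> exists d, code x d) ->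
  (forall x y d, S x -> S y -> code x d -> code y d -> x = y) ->
  exists2 m, S #= `I_m & (m <= #|U|)%N.
Proof.
move=> code_ex code_inj.
have [c c_code] : {c : T -> option U & forall x, S x -> exists2 d, c x = Some d & code x d}.
  apply: (@choice T (option U) (fun x o => S x -> exists2 d, o = Some d & code x d)) => x.
  have [Sx|nSx] := pselect (S x); last by exists None.
  by have [d xd] := code_ex x Sx; exists (Some d) => _; exists d.
pose psi x := if c x is Some d then val (enum_rank d) else 0%N.
have psi_inj : {in S &, injective psi}.
  move=> x y; rewrite !in_setE => Sx Sy.
  have [dx cx xdx] := c_code x Sx; have [dy cy ydy] := c_code y Sy.
  rewrite /psi cx cy => /val_inj/enum_rank_inj dxy.
  by apply: code_inj Sx Sy xdx _; rewrite dxy.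
have psiS : psi @` S `<=` `I_#|U|.
  by move=> _ [x Sx <-]; have [d cx _] := c_code x Sx; rewrite /psi cx /=.
have [m Sm] : finite_set (psi @` S) by apply: sub_finite_set psiS (finite_II _).
exists m; first exact: card_eq_trans (card_esym (inj_card_eq psi_inj)) Sm.
by rewrite -card_le_II -(card_le_eql Sm); apply: subset_card_le.
Qed.

Lemma card_le_inj (T T' : Type) (S : set T) (S' : set T') m m' (psi : T -> T') :
  S #= `I_m -> S' #= `I_m' -> {in S &, injective psi} ->
  (forall x, S x -> S' (psi x)) -> (m <= m')%N.
Proof.
move=> Sm S'm' psi_inj psiS.
rewrite -card_le_II -(card_le_eql Sm) -(card_le_eqr S'm').
rewrite -(card_le_eql (inj_card_eq psi_inj)).
by apply: subset_card_le => _ [x Sx <-]; apply: psiS.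
Qed.

Lemma card_eq_II_enum (T : Type) (S : set T) m : S #= `I_m ->
  exists2 phi : T -> nat, {in S &, injective phi} & forall x, S x -> (phi x < m)%N.
Proof.
by move/pcard_eqP; rewrite bijPex => -[phi [phiS phi_inj _]]; exists phi => // x /phiS.
Qed.

End Counting.

Lemma finite_subgroups_of_index (V : finType) (e : rel V) n :
  finite_set (subgroups_of_index e n).
Proof.
pose U : finType := ({ffun V -> {ffun 'I_n -> 'I_n}} * 'I_n)%type.
pose code (H : set (seq V)) (d : U) := exists f : seq V -> 'I_n,
  [/\ coset_map H f, f [::] = d.2 & forall v u, d.1 v (f u) = f (v :: u)].
have [m Sm _] : exists2 m, (subgroups_of_index e n #= `I_m)%card & (m <= #|U|)%N;
  last by exists m.
apply: (card_code_le (code := code)) => [H [H_sub [f f_coset]]|].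
  have [rep repK] := choice f_coset.1.
  exists ([ffun v => [ffun i => f (v :: rep i)]], f [::]), f; split => // v u.
  by rewrite !ffunE; apply: (coset_map_cons H_sub f_coset); rewrite repK.
move=> H1 H2 [rho p0] _ _ [f1 [f1_coset /= f1_nil f1_cons]] [f2 [f2_coset /= f2_nil f2_cons]].
have orbitE f : f [::] = p0 -> (forall v u, rho v (f u) = f (v :: u)) ->
    forall u, f u = foldr (fun v => rho v) p0 u.
  by move=> f_nil f_cons; elim=> //= v u <-.
apply/funext => u; apply/propext.
rewrite -(coset_map_nil f1_coset) -(coset_map_nil f2_coset).
by rewrite (orbitE f1 f1_nil f1_cons u) (orbitE f2 f2_nil f2_cons u) f1_nil f2_nil.
Qed.

Lemma s_n_card (V : finType) (e : rel V) n :
  (subgroups_of_index e n #= `I_(s_n e n))%card.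
Proof.
have [m Sm] := finite_subgroups_of_index e n.
by apply: (@xgetPex _ 0%N [set k | subgroups_of_index e n #= `I_k]%card); exists m.
Qed.

Lemma pmap_rev (aT rT : Type) (f : aT -> option rT) (s : seq aT) :
  pmap f (rev s) = rev (pmap f s).
Proof.
elim: s => [|x s IH] //=; rewrite rev_cons -cats1 pmap_cat IH /=.
by case: (f x) => [y|] /=; rewrite ?rev_cons ?cats1 ?cats0.
Qed.

Section Retract.
Variables (V W : finType) (e : rel V) (e' : rel W) (p : V -> option W) (i : W -> V).
Hypothesis iK : pcancel i p.
Hypothesis p_adj : forall x y, e x y ->
  match p x, p y with Some x', Some y' => e' x' y' | _, _ => true end.

Lemma s_n_retract n : (s_n e' n <= s_n e n)%N.
Proof.
apply: (card_le_inj (s_n_card e' n) (s_n_card e n) (psi := fun H w => H (pmap p w))).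
  move=> H1 H2 _ _ /= H12; apply/funext => u.
  by have := congr1 (fun F => F (map i u)) H12; rewrite /= (map_pK iK).
move=> H [[H1 H_raag HM HV] [f [f_surj f_coset]]]; split.
  split=> /= [|u v /(raag_eq_pmap p_adj)|u v|u]; rewrite ?pmap_cat ?pmap_rev //.
  - exact: H_raag.
  - exact: HM.
  - exact: HV.
exists (fun w => f (pmap p w)); split.
  by move=> k; have [u <-] := f_surj k; exists (map i u); rewrite (map_pK iK).
by move=> u v; rewrite f_coset pmap_cat pmap_rev.
Qed.

End Retract.

Lemma s_n_join_l (V1 V2 : finType) (e1 : rel V1) (e2 : rel V2) n :
  (s_n e1 n <= s_n (join_rel e1 e2) n)%N.
Proof.
apply: (@s_n_retract _ _ _ _ (fun x => if x is inl y then Some y else None) inl) => //.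
by case=> [x|x] [y|y].
Qed.

Lemma s_n_join_r (V1 V2 : finType) (e1 : rel V1) (e2 : rel V2) n :
  (s_n e2 n <= s_n (join_rel e1 e2) n)%N.
Proof.
apply: (@s_n_retract _ _ _ _ (fun x => if x is inr y then Some y else None) inr) => //.
by case=> [x|x] [y|y].
Qed.

Section JoinWords.
Variables (V1 V2 : finType) (e1 : rel V1) (e2 : rel V2).
Local Notation e := (join_rel e1 e2).
Local Notation req := (raag_eq e).
Local Notation iA := (map (@inl V1 V2)).
Local Notation iB := (map (@inr V1 V2)).

Lemma raag_eq_inl a a' : raag_eq e1 a a' -> req (iA a) (iA a').
Proof. exact: raag_eq_map. Qed.

Lemma raag_eq_inr b b' : raag_eq e2 b b' -> req (iB b) (iB b').
Proof. exact: raag_eq_map. Qed.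

Lemma raag_eq_inr_inl y a w : req (inr y :: iA a ++ w) (iA a ++ inr y :: w).
Proof.
elim: a => [|x a IH] /=; first exact: req_refl.
exact: req_trans (@req_comm _ e [::] _ (inr y) (inl x) isT) (raag_eq_catl [:: inl x] IH).
Qed.

Lemma raag_eq_join_comm b a : req (iB b ++ iA a) (iA a ++ iB b).
Proof.
elim: b => [|y b IH] /=; first by rewrite cats0; apply: req_refl.
exact: req_trans (raag_eq_catl [:: inr y] IH) (raag_eq_inr_inl y a (iB b)).
Qed.

Lemma raag_eq_join_split w : exists a b, req w (iA a ++ iB b).
Proof.
elim: w => [|[x|y] w [a [b IH]]]; first by exists [::], [::]; apply: req_refl.
  by exists (x :: a), b; apply: (raag_eq_catl [:: inl x] IH).
exists a, (y :: b).
exact: req_trans (raag_eq_catl [:: inr y] IH) (raag_eq_inr_inl y a (iB b)).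
Qed.

Lemma raag_eq_join_mul a b a' b' :
  req (iA a ++ iB b ++ iA a' ++ iB b') (iA (a ++ a') ++ iB (b ++ b')).
Proof.
rewrite !map_cat -!catA; apply: raag_eq_catl; rewrite !catA; apply: raag_eq_catr.
exact: raag_eq_join_comm.
Qed.

Lemma raag_eq_join_rev a b : req (rev (iA a ++ iB b)) (iA (rev a) ++ iB (rev b)).
Proof. by rewrite rev_cat -!map_rev; apply: raag_eq_join_comm. Qed.

Lemma raag_eq_join_invM a b a' b' :
  req (rev (iA a ++ iB b) ++ iA a' ++ iB b') (iA (rev a ++ a') ++ iB (rev b ++ b')).
Proof.
apply: req_trans (raag_eq_catr _ (raag_eq_join_rev a b)) _.
by rewrite -catA; apply: raag_eq_join_mul.
Qed.

End JoinWords.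

Definition meet_left (V1 V2 : Type) (H : set (seq (V1 + V2))) : set (seq V1) :=
  fun a => H (map inl a).

Definition proj_right (V1 V2 : Type) (H : set (seq (V1 + V2))) : set (seq V2) :=
  fun b => exists a, H (map inl a ++ map inr b).

Section JoinSubgroups.
Variables (V1 V2 : finType) (e1 : rel V1) (e2 : rel V2).
Local Notation e := (join_rel e1 e2).
Local Notation iA := (map (@inl V1 V2)).
Local Notation iB := (map (@inr V1 V2)).
Variable H : set (seq (V1 + V2)).
Hypothesis H_sub : is_subgroup e H.

Lemma meet_left_subgroup : is_subgroup e1 (meet_left H).
Proof.
split; rewrite /meet_left.
- exact: subgroup1 H_sub.
- by move=> u v /(raag_eq_inl e2) /(subgroup_raag H_sub).
- by move=> u v Hu Hv; rewrite map_cat; exact: (subgroupM H_sub Hu Hv).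
- by move=> u Hu; rewrite map_rev; exact: (subgroupV H_sub Hu).
Qed.

Lemma proj_right_subgroup : is_subgroup e2 (proj_right H).
Proof.
split; rewrite /proj_right.
- by exists [::]; apply: subgroup1 H_sub.
- move=> u v /(raag_eq_inr e1) uv [a Hau]; exists a.
  by apply: (subgroup_raag H_sub _ Hau); apply: raag_eq_catl.
- move=> u v [a Hau] [a' Ha'v]; exists (a ++ a'); have := subgroupM H_sub Hau Ha'v.
  by rewrite -catA; apply: (subgroup_raag H_sub); apply: raag_eq_join_mul.
- move=> u [a Hau]; exists (rev a); have := subgroupV H_sub Hau.
  by apply: (subgroup_raag H_sub); apply: raag_eq_join_rev.
Qed.

Lemma subgroup_join_revK a b : H (iA a ++ iB (rev b ++ b)) <-> H (iA a).
Proof.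
rewrite (subgroup_raagE H_sub (v := iA a)) //.
rewrite map_cat map_rev -{2}[iA a]cats0; apply: raag_eq_catl.
by have := raag_eq_revK e (iB b) [::]; rewrite cats0.
Qed.

Variables (n : nat) (f : seq (V1 + V2) -> 'I_n).
Hypothesis f_coset : coset_map H f.

Lemma coset_map_join a b a' b' :
  f (iA a ++ iB b) = f (iA a' ++ iB b') <-> H (iA (rev a ++ a') ++ iB (rev b ++ b')).
Proof. by rewrite f_coset.2 (subgroup_raagE H_sub (raag_eq_join_invM e1 e2 a b a' b')). Qed.

Definition left_cosets : {set 'I_n} := [set p | `[< exists a, f (iA a) = p >]].

Definition coset_block (b : seq V2) : {set 'I_n} :=
  [set p | `[< exists a, f (iA a ++ iB b) = p >]].

Definition coset_blocks : {set {set 'I_n}} := [set X | `[< exists b, coset_block b = X >]].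

Lemma coset_blockP p b : reflect (exists a, f (iA a ++ iB b) = p) (p \in coset_block b).
Proof. by rewrite inE; apply: asboolP. Qed.

Lemma mem_coset_blocks b : coset_block b \in coset_blocks.
Proof. by rewrite inE; apply/asboolP; exists b. Qed.

Lemma mem_left_cosets_nil : f [::] \in left_cosets.
Proof. by rewrite inE; apply/asboolP; exists [::]. Qed.

Lemma coset_blockE b b' : coset_block b = coset_block b' <-> proj_right H (rev b ++ b').
Proof.
split=> [bb'|[a0 Ha0]].
  have /coset_blockP [a /esym /coset_map_join Ha] : f (iA [::] ++ iB b) \in coset_block b'.
    by rewrite -bb'; apply/coset_blockP; exists [::].
  by exists (rev [::] ++ a).
have sub_block c c' a1 : H (iA a1 ++ iB (rev c ++ c')) ->
    {subset coset_block c <= coset_block c'}.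
  move=> Hc p /coset_blockP [a <-]; apply/coset_blockP; exists (a ++ a1).
  apply/esym/coset_map_join; apply: (subgroup_raag H_sub _ Hc); apply: raag_eq_catr.
  by apply/raag_eq_inl/req_sym; apply: raag_eq_revK.
apply/setP => p; apply/idP/idP; first exact: (sub_block _ _ _ Ha0).
apply: (sub_block _ _ (rev a0)); have := subgroupV H_sub Ha0.
apply: (subgroup_raag H_sub); apply: req_trans (raag_eq_join_rev e1 e2 a0 _) _.
by rewrite rev_cat revK; apply: req_refl.
Qed.

Lemma coset_block_meet p b b' :
  p \in coset_block b -> p \in coset_block b' -> coset_block b = coset_block b'.
Proof.
move=> /coset_blockP [a <-] /coset_blockP [a' /esym /coset_map_join Hb].
by apply/coset_blockE; exists (rev a ++ a').
Qed.

Lemma coset_block_cover p : exists b, p \in coset_block b.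
Proof.
have [w <-] := f_coset.1 p; have [a [b wab]] := raag_eq_join_split e1 e2 w.
by exists b; apply/coset_blockP; exists a; apply/esym/(coset_map_raag H_sub f_coset).
Qed.

(* Right multiplication by iB b maps the W(G1)-cosets bijectively onto a block. *)
Lemma card_coset_block b : #|coset_block b| = #|left_cosets|.
Proof.
have [rep repK] : {rep : 'I_n -> seq V1 & forall p, p \in left_cosets -> f (iA (rep p)) = p}.
  apply: (@choice _ _ (fun p a => p \in left_cosets -> f (iA a) = p)) => p.
  have [|pL] := boolP (p \in left_cosets); last by exists [::].
  by rewrite inE => /asboolP [a fa]; exists a.
pose shift p := f (iA (rep p) ++ iB b).
have -> : coset_block b = shift @: left_cosets.
  apply/setP => p; apply/coset_blockP/imsetP => [[a <-]|[q _ ->]]; last by exists (rep q).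
  have fa_left : f (iA a) \in left_cosets by rewrite inE; apply/asboolP; exists a.
  exists (f (iA a)) => //; apply/coset_map_join/subgroup_join_revK.
  by have /esym /f_coset.2 := repK _ fa_left; rewrite map_cat map_rev.
apply: card_in_imset => p q pL qL /coset_map_join /subgroup_join_revK Hpq.
by rewrite -(repK p pL) -(repK q qL); apply/f_coset.2; rewrite map_cat map_rev in Hpq.
Qed.

Lemma card_left_cosets_blocks : (#|left_cosets| * #|coset_blocks| = n)%N.
Proof.
have blocks_partition : finset.partition coset_blocks [set: 'I_n].
  apply/and3P; split.
  - apply/eqP/setP => p; rewrite inE; apply/bigcupP.
    by have [b pb] := coset_block_cover p; exists (coset_block b) => //; apply: mem_coset_blocks.
  - apply/finset.trivIsetP => X Y; rewrite !inE => -[b <-] [b' <-] bb'.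
    rewrite disjoint_subset; apply/fintype.subsetP => p pb; rewrite inE; apply/negP => pb'.
    by move/eqP: bb'; apply; apply: coset_block_meet pb pb'.
  - rewrite inE; apply/negP => /asboolP [b b0].
    have := card_coset_block b; rewrite b0 cards0 => /esym /eqP; rewrite cards_eq0.
    by apply/negP/set0Pn; exists (f [::]); apply: mem_left_cosets_nil.
transitivity (\sum_(X in coset_blocks) #|X|); last first.
  by rewrite -(card_partition blocks_partition) cardsT card_ord.
rewrite mulnC -sum_nat_const; apply: eq_bigr => X; rewrite inE => /asboolP [b <-].
by rewrite card_coset_block.
Qed.

Lemma meet_left_index : has_index e1 (meet_left H) #|left_cosets|.
Proof.
exists (fun a => enum_rank_in mem_left_cosets_nil (f (iA a))); split.
  move=> t; have := enum_valP t; rewrite inE => /asboolP [a fa]; exists a.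
  by rewrite fa enum_valK_in.
move=> u v; split=> [/enum_rank_in_inj fuv|Huv].
  have /f_coset.2 : f (iA u) = f (iA v).
    by apply: fuv; rewrite inE; apply/asboolP; [exists u | exists v].
  by rewrite /meet_left map_cat map_rev.
by congr enum_rank_in; apply/f_coset.2; rewrite -map_rev -map_cat.
Qed.

Lemma proj_right_index : has_index e2 (proj_right H) #|coset_blocks|.
Proof.
exists (fun b => enum_rank_in (mem_coset_blocks [::]) (coset_block b)); split.
  move=> t; have := enum_valP t; rewrite inE => /asboolP [b fb]; exists b.
  by rewrite fb enum_valK_in.
move=> u v; split=> [/enum_rank_in_inj fuv|/coset_blockE -> //].
by apply/coset_blockE; apply: fuv; apply: mem_coset_blocks.
Qed.

End JoinSubgroups.

Section Schreier.
Variables (V1 V2 : finType) (e1 : rel V1) (e2 : rel V2).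
Local Notation e := (join_rel e1 e2).
Local Notation iA := (map (@inl V1 V2)).
Local Notation iB := (map (@inr V1 V2)).

Lemma subgroup_join_raagl (K : set (seq (V1 + V2))) a a' b : is_subgroup e K ->
  raag_eq e1 a a' -> K (iA a ++ iB b) -> K (iA a' ++ iB b).
Proof. by move=> K_sub aa'; apply/(subgroup_raag K_sub)/raag_eq_catr/raag_eq_inl. Qed.

Lemma subgroup_join_raagr (K : set (seq (V1 + V2))) a b b' : is_subgroup e K ->
  raag_eq e2 b b' -> K (iA a ++ iB b) -> K (iA a ++ iB b').
Proof. by move=> K_sub bb'; apply/(subgroup_raag K_sub)/raag_eq_catl/raag_eq_inr. Qed.

Variables (H H' : set (seq (V1 + V2))) (m : nat) (fK : seq V2 -> 'I_m) (rep : 'I_m -> seq V2).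
Hypotheses (H_sub : is_subgroup e H) (H'_sub : is_subgroup e H').
Hypothesis meet_left_eq : forall a, H (iA a) <-> H' (iA a).
Hypotheses (fK_coset : coset_map (proj_right H) fK) (repK : cancel rep fK).
Hypothesis rep_nil : rep (fK [::]) = [::].

Definition schreier_gen (t : 'I_m) (v : V2) : seq V2 := rev (rep (fK (v :: rep t))) ++ v :: rep t.

Lemma schreier_gen_proj t v : proj_right H (schreier_gen t v).
Proof. by apply/fK_coset.2; rewrite repK. Qed.

Hypothesis lifts_agree : forall t v, exists a a',
  [/\ H (iA a ++ iB (schreier_gen t v)), H' (iA a' ++ iB (schreier_gen t v))
    & H (iA (rev a ++ a'))].

Let offset (b : seq V2) : seq V2 := rev (rep (fK b)) ++ b.

Lemma offset_cons v b : raag_eq e2 (schreier_gen (fK b) v ++ offset b) (offset (v :: b)).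
Proof.
rewrite /schreier_gen /offset.
have -> : fK (v :: rep (fK b)) = fK (v :: b).
  by apply: (coset_map_cons (proj_right_subgroup H_sub) fK_coset); rewrite repK.
rewrite -!catA; apply: raag_eq_catl.
exact: (raag_eq_catl [:: v] (raag_eq_catrevK _ _ _)).
Qed.

Lemma offset_lift b a : H (iA a ++ iB (offset b)) -> H' (iA a ++ iB (offset b)).
Proof.
elim: b a => [|v b IH] a; first by rewrite /offset rep_nil !cats0 => /meet_left_eq.
set s := schreier_gen (fK b) v.
move=> /(subgroup_join_raagr H_sub (req_sym (offset_cons v b))) Ha.
apply: (subgroup_join_raagr H'_sub (offset_cons v b)).
have [a1 [a1' [Ha1 H'a1' Ha1a1']]] := lifts_agree (fK b) v.
have H'rest : H' (iA (rev a1 ++ a) ++ iB (offset b)).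
  apply: IH; have := subgroupM H_sub (subgroupV H_sub Ha1) Ha.
  apply: (subgroup_raag H_sub); apply: req_trans (raag_eq_join_invM e1 e2 _ _ _ _) _.
  exact/raag_eq_catl/raag_eq_inr/raag_eq_revK.
have H'a1'a1 : H' (iA (rev a1' ++ a1)).
  by apply/meet_left_eq; have := subgroupV H_sub Ha1a1'; rewrite -map_rev rev_cat revK.
(* a s x = (a1' s) (a1'^-1 a1) (a1^-1 a x), with x = offset b *)
have H'prod := subgroupM H'_sub H'a1' (subgroupM H'_sub H'a1'a1 H'rest).
rewrite -!catA [iA (rev a1' ++ a1) ++ _]catA -map_cat in H'prod.
have := subgroup_raag H'_sub (raag_eq_join_mul e1 e2 _ _ _ _) H'prod.
apply: (subgroup_join_raagl H'_sub); rewrite -!catA.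
by apply: req_trans (raag_eq_catrevK e1 a1' _) _; apply: raag_eq_catrevK.
Qed.

Lemma schreier_sub w : H w -> H' w.
Proof.
move=> Hw; have [a [b wab]] := raag_eq_join_split e1 e2 w.
have Hab := subgroup_raag H_sub wab Hw.
have fKb : fK b = fK [::] by apply/esym/(coset_map_nil fK_coset); exists a.
have offsetb : offset b = b by rewrite /offset fKb rep_nil.
have := @offset_lift b a; rewrite offsetb => /(_ Hab).
exact: (subgroup_raag H'_sub (req_sym wab)).
Qed.

End Schreier.

(* Canonical choices, so that equal subgroups get equal coset maps and
   transversals; the defaults ord0 and [::] only matter for subgroups of another
   index. *)
Definition coset_index (V : Type) (H : set (seq V)) (m : nat) : seq V -> 'I_m.+1 :=
  if pselect (exists f, coset_map H f) is left f_ex then projT1 (cid f_ex) else fun=> ord0.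

Definition coset_rep (V : Type) (H : set (seq V)) (m : nat) (t : 'I_m.+1) : seq V :=
  if t == coset_index H m [::] then [::]
  else if pselect (exists u, coset_index H m u = t) is left u_ex then projT1 (cid u_ex)
  else [::].
Arguments coset_rep {V} H m t.

Section CanonicalCosets.
Variables (V : finType) (e : rel V) (H : set (seq V)) (m : nat).
Hypothesis H_index : has_index e H m.+1.

Lemma coset_indexP : coset_map H (coset_index H m).
Proof. by rewrite /coset_index; case: pselect => // f_ex; apply: (projT2 (cid f_ex)). Qed.

Lemma coset_rep_nil : coset_rep H m (coset_index H m [::]) = [::].
Proof. by rewrite /coset_rep eqxx. Qed.

Lemma coset_repK : cancel (coset_rep H m) (coset_index H m).
Proof.
move=> t; rewrite /coset_rep; case: eqP => [-> //|_].
case: pselect => [u_ex|[]]; first exact: (projT2 (cid u_ex)).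
exact: coset_indexP.1.
Qed.

End CanonicalCosets.

Lemma has_index_gt0 (V : finType) (e : rel V) H m : has_index e H m -> (0 < m)%N.
Proof. by case=> f _; apply: leq_ltn_trans (leq0n _) (ltn_ord (f [::])). Qed.

Definition subgroup_code (V : finType) (e : rel V) (i : nat) : set (seq V) -> nat :=
  s2val (cid2 (card_eq_II_enum (s_n_card e i))).

Lemma subgroup_code_inj (V : finType) (e : rel V) i :
  {in subgroups_of_index e i &, injective (subgroup_code e i)}.
Proof. exact: (s2valP (cid2 (card_eq_II_enum (s_n_card e i)))). Qed.

Lemma subgroup_code_lt (V : finType) (e : rel V) i H :
  subgroups_of_index e i H -> (subgroup_code e i H < s_n e i)%N.
Proof. exact: (s2valP' (cid2 (card_eq_II_enum (s_n_card e i)))). Qed.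

Section JoinCount.
Variables (V1 V2 : finType) (e1 : rel V1) (e2 : rel V2) (n : nat).
Local Notation e := (join_rel e1 e2).
Local Notation iA := (map (@inl V1 V2)).
Local Notation iB := (map (@inr V1 V2)).

(* A subgroup of index n = i k is coded by its meet with W(G1) (index i), its
   projection to W(G2) (index k), and the W(G1)-cosets of lifts of the Schreier
   generators of that projection.  A pair ik stands for the factorisation
   n = ik.1.+1 * ik.2.+1; off factorisations the counts vanish, so join_data is
   empty there. *)
Definition factor_count1 (ik : 'I_n * 'I_n) : nat :=
  if (ik.1.+1 * ik.2.+1 == n)%N then s_n e1 ik.1.+1 else 0.

Definition factor_count2 (ik : 'I_n * 'I_n) : nat :=
  if (ik.1.+1 * ik.2.+1 == n)%N then s_n e2 ik.2.+1 else 0.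

Definition join_data (ik : 'I_n * 'I_n) : finType :=
  ('I_(factor_count1 ik) * 'I_(factor_count2 ik) * {ffun 'I_ik.2.+1 * V2 -> 'I_ik.1.+1})%type.

Definition join_code (H : set (seq (V1 + V2))) (d : {ik : 'I_n * 'I_n & join_data ik})
    : Prop :=
  let i := (tag d).1 in let k := (tag d).2 in
  [/\ subgroups_of_index e1 i.+1 (meet_left H),
      subgroups_of_index e2 k.+1 (proj_right H),
      val (tagged d).1.1 = subgroup_code e1 i.+1 (meet_left H),
      val (tagged d).1.2 = subgroup_code e2 k.+1 (proj_right H) &
      forall t v, exists2 a,
        H (iA a ++ iB (schreier_gen (coset_index (proj_right H) k)
                                    (coset_rep (proj_right H) k) t v))
        & coset_index (meet_left H) i a = (tagged d).2 (t, v)].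

Lemma join_code_exists H : subgroups_of_index e n H -> exists d, join_code H d.
Proof.
move=> [H_sub [f f_coset]].
have indexA := meet_left_index e1 f_coset.
have indexB := proj_right_index H_sub f_coset.
have nE := card_left_cosets_blocks H_sub f_coset.
have [i iE] : exists i, #|left_cosets f| = i.+1.
  by exists #|left_cosets f|.-1; rewrite prednK // (has_index_gt0 indexA).
have [k kE] : exists k, #|coset_blocks f| = k.+1.
  by exists #|coset_blocks f|.-1; rewrite prednK // (has_index_gt0 indexB).
rewrite iE in indexA nE; rewrite kE in indexB nE.
have subA : subgroups_of_index e1 i.+1 (meet_left H) := conj (meet_left_subgroup H_sub) indexA.
have subB : subgroups_of_index e2 k.+1 (proj_right H) := conj (proj_right_subgroup H_sub) indexB.
have i_lt : (i < n)%N by rewrite -nE leq_pmulr.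
have k_lt : (k < n)%N by rewrite -nE leq_pmull.
pose ik := (Ordinal i_lt, Ordinal k_lt).
have [lift liftH] := @choice _ _ (fun tv a => H (iA a ++
    iB (schreier_gen (coset_index (proj_right H) k) (coset_rep (proj_right H) k) tv.1 tv.2)))
  (fun tv => schreier_gen_proj (coset_indexP indexB) (coset_repK indexB) tv.1 tv.2).
have codeA : (subgroup_code e1 i.+1 (meet_left H) < factor_count1 ik)%N.
  by rewrite /factor_count1 /= nE eqxx; apply: subgroup_code_lt.
have codeB : (subgroup_code e2 k.+1 (proj_right H) < factor_count2 ik)%N.
  by rewrite /factor_count2 /= nE eqxx; apply: subgroup_code_lt.
exists (Tagged join_data ((Ordinal codeA, Ordinal codeB),
                          [ffun tv => coset_index (meet_left H) i (lift tv)])).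
by split=> // t v; exists (lift (t, v)); rewrite ?ffunE //; apply: (liftH (t, v)).
Qed.

Lemma join_code_sub H H' d : is_subgroup e H -> is_subgroup e H' ->
  join_code H d -> join_code H' d -> forall w, H w -> H' w.
Proof.
case: d => [[i k] [[cA cB] g]] H_sub H'_sub /=.
move=> [indexA indexB cAE cBE lift] [indexA' indexB' cAE' cBE' lift'].
have meetE : meet_left H = meet_left H'.
  by apply: (@subgroup_code_inj _ e1 i.+1); rewrite ?in_setE // -cAE -cAE'.
have projE : proj_right H = proj_right H'.
  by apply: (@subgroup_code_inj _ e2 k.+1); rewrite ?in_setE // -cBE -cBE'.
have fA_coset := coset_indexP indexA.2.
apply: (schreier_sub H_sub H'_sub _ (coset_indexP indexB.2) (coset_repK indexB.2)
                     (coset_rep_nil _ _)).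
  by move=> a; rewrite -[H' _]/(meet_left H' a) -meetE.
move=> t v; have [a Ha ga] := lift t v; have [a' H'a' ga'] := lift' t v.
rewrite -projE -meetE in H'a' ga'.
by exists a, a'; split=> //; apply/fA_coset.2; rewrite ga ga'.
Qed.

Lemma join_code_inj H H' d : subgroups_of_index e n H -> subgroups_of_index e n H' ->
  join_code H d -> join_code H' d -> H = H'.
Proof.
move=> [H_sub _] [H'_sub _] cH cH'; apply/funext => w; apply/propext.
split; first exact: (join_code_sub H_sub H'_sub cH cH').
exact: (join_code_sub H'_sub H_sub cH' cH).
Qed.

Lemma s_n_join_le : (s_n e n <= \sum_(ik : 'I_n * 'I_n | ik.1.+1 * ik.2.+1 == n)
                       s_n e1 ik.1.+1 * s_n e2 ik.2.+1 * ik.1.+1 ^ (ik.2.+1 * #|V2|))%N.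
Proof.
have [m Sm mU] := card_code_le join_code_exists join_code_inj.
have -> : s_n e n = m by apply/card_eq_II/(card_eq_trans (card_esym (s_n_card e n)) Sm).
apply: leq_trans mU _; rewrite card_tagged sumnE big_map big_enum [leqRHS]big_mkcond /=.
apply: leq_sum => ik _; rewrite /join_data /factor_count1 /factor_count2.
by rewrite !card_prod card_ffun !card_ord card_prod card_ord; case: ifP.
Qed.

End JoinCount.

Section GrowthRate.
Variable R : realType.

Definition growth_rate (a : nat -> nat) (n : nat) : R :=
  ln (a n)%:R / (n%:R * ln n%:R).

Lemma ln_natr_ge0 m : 0 <= ln (m%:R : R).
Proof. by case: m => [|m]; [rewrite ln0 | apply: ln_ge0; rewrite ler1n]. Qed.

Lemma ler_ln_natr m m' : (m <= m')%N -> ln (m%:R : R) <= ln m'%:R.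
Proof.
case: m => [|m] mm'; first by rewrite ln0 // ln_natr_ge0.
by rewrite ler_ln ?posrE ?ltr0n ?ler_nat // (leq_trans _ mm').
Qed.

Lemma ln_natr_le m : ln (m%:R : R) <= m%:R.
Proof. by case: m => [|m]; [rewrite ln0 | apply/ltW/ln_sublinear; rewrite ltr0n]. Qed.

Lemma natr_mul_ln_ge0 m : 0 <= m%:R * ln (m%:R : R).
Proof. by rewrite mulr_ge0 ?ln_natr_ge0. Qed.

Lemma natr_mul_ln_gt0 m : (1 < m)%N -> 0 < m%:R * ln (m%:R : R).
Proof. by move=> m_gt1; rewrite mulr_gt0 ?ln_gt0 ?ltr1n // ltr0n ltnW. Qed.

Lemma growth_rate_ge0 a n : 0 <= growth_rate a n.
Proof. by rewrite divr_ge0 ?ln_natr_ge0 ?natr_mul_ln_ge0. Qed.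

Lemma growth_rate_lim_ge0 a b : growth_rate a @ \oo --> b -> 0 <= b.
Proof.
by move=> ab; apply: (closed_cvg _ (@closed_ge R 0) _ _ ab); apply: nearW => n /=;
  apply: growth_rate_ge0.
Qed.

Lemma ler_growth_rate a c n : (a n <= c n)%N -> growth_rate a n <= growth_rate c n.
Proof. by move=> acn; rewrite ler_wpM2r ?invr_ge0 ?natr_mul_ln_ge0 ?ler_ln_natr. Qed.

Lemma growth_rate_expR_bound a b k : growth_rate a @ \oo --> b -> b < k ->
  exists2 C : R, 0 < C & forall m, (a m)%:R <= C * expR (k * (m%:R * ln m%:R)).
Proof.
move=> ab bk; have k_ge0 : 0 <= k by apply: le_trans (ltW bk); apply: growth_rate_lim_ge0 ab.
have [N _ aN] := cvgr_lt _ ab _ bk; pose N2 := maxn N 2.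
pose C : R := 1 + \sum_(i < N2) (a i)%:R.
have C_ge1 : 1 <= C by rewrite lerDl sumr_ge0.
exists C => [|m]; first exact: lt_le_trans C_ge1.
have C_le : C <= C * expR (k * (m%:R * ln m%:R)).
  rewrite ler_peMr ?(le_trans _ C_ge1) //; apply: le_trans (expR_ge1Dx _).
  by rewrite lerDl mulr_ge0 ?natr_mul_ln_ge0.
have [mN|Nm] := ltnP m N2.
  by apply: le_trans C_le; rewrite /C (bigD1 (Ordinal mN)) //= addrCA lerDl addr_ge0 ?sumr_ge0.
have /aN : (N <= m)%N by apply: leq_trans Nm; apply: leq_maxl.
have m_gt1 : (1 < m)%N by apply: leq_trans Nm; apply: leq_maxr.
rewrite /growth_rate ltr_pdivrMr ?natr_mul_ln_gt0 // => lnam.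
apply: le_trans (_ : expR (k * (m%:R * ln m%:R)) <= _).
  case: (a m) lnam => [|am] lnam; first exact: expR_ge0.
  by rewrite -[X in X <= _]lnK ?posrE ?ltr0n // ler_expR ltW.
by rewrite ler_peMl ?expR_ge0.
Qed.

Lemma factor_exponent_le (k : R) (d i j : nat) : 0 <= k -> (0 < i)%N -> (0 < j)%N ->
  k * (i%:R * ln i%:R) + k * (j%:R * ln j%:R) + (j * d)%:R * ln i%:R <=
  k * ((i * j).+1%:R * ln (i * j)%:R) + (d * (i * j))%:R.
Proof.
move=> k_ge0 i_gt0 j_gt0.
have lni := ler_ln_natr (leq_pmulr i j_gt0); have lnj := ler_ln_natr (leq_pmull j i_gt0).
have ij_le : (i + j <= (i * j).+1)%N by rewrite -[(i * j).+1]add1n; nia.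
have sum_le : i%:R * ln (i%:R : R) + j%:R * ln j%:R <= (i * j).+1%:R * ln (i * j)%:R.
  apply: le_trans (_ : (i + j)%:R * ln (i * j)%:R <= _); last first.
    by rewrite ler_wpM2r ?ln_natr_ge0 ?ler_nat.
  by rewrite natrD mulrDl lerD // ler_wpM2l.
have cross_le : j%:R * ln (i%:R : R) <= (i * j)%:R.
  by rewrite natrM mulrC ler_wpM2r ?ln_natr_le.
rewrite natrM mulrAC (natrM _ d) [_ * (i * j)%:R]mulrC lerD //.
  by rewrite -mulrDr ler_wpM2l.
by rewrite ler_wpM2r.
Qed.

Lemma join_term_le a b (CA CB k : R) (d i j : nat) : 0 <= k -> 0 < CA -> 0 < CB ->
  (forall m, (a m)%:R <= CA * expR (k * (m%:R * ln m%:R))) ->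
  (forall m, (b m)%:R <= CB * expR (k * (m%:R * ln m%:R))) ->
  (0 < i)%N -> (0 < j)%N ->
  ((a i * b j * i ^ (j * d))%N)%:R <=
    CA * CB * expR (k * ((i * j).+1%:R * ln (i * j)%:R) + (d * (i * j))%:R).
Proof.
move=> k_ge0 CA_gt0 CB_gt0 aC bC i_gt0 j_gt0.
have powE : (i%:R : R) ^+ (j * d) = expR ((j * d)%:R * ln i%:R).
  by rewrite expRM_natl lnK // posrE ltr0n.
rewrite (natrM _ (a i * b j)) (natrM _ (a i)) natrX powE.
apply: le_trans (_ : CA * expR (k * (i%:R * ln i%:R)) * (CB * expR (k * (j%:R * ln j%:R)))
                       * expR ((j * d)%:R * ln i%:R) <= _).
  by rewrite ler_wpM2r ?expR_ge0 // ler_pM.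
have -> : CA * expR (k * (i%:R * ln i%:R)) * (CB * expR (k * (j%:R * ln j%:R)))
            * expR ((j * d)%:R * ln i%:R) = CA * CB *
          expR (k * (i%:R * ln i%:R) + k * (j%:R * ln j%:R) + (j * d)%:R * ln i%:R).
  by rewrite !expRD; ring.
apply: ler_wpM2l; first by rewrite mulr_ge0 ?ltW.
by rewrite ler_expR factor_exponent_le.
Qed.

Lemma join_sum_le a b c (CA CB k : R) (d n : nat) : 0 <= k -> 0 < CA -> 0 < CB ->
  (forall m, (a m)%:R <= CA * expR (k * (m%:R * ln m%:R))) ->
  (forall m, (b m)%:R <= CB * expR (k * (m%:R * ln m%:R))) ->
  (c n <= \sum_(ik : 'I_n * 'I_n | ik.1.+1 * ik.2.+1 == n)
            a ik.1.+1 * b ik.2.+1 * ik.1.+1 ^ (ik.2.+1 * d))%N ->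
  (c n)%:R <= (n * n)%:R * (CA * CB * expR (k * (n.+1%:R * ln n%:R) + (d * n)%:R)).
Proof.
move=> k_ge0 CA_gt0 CB_gt0 aC bC cn_le.
set K := CA * CB * expR _.
have K_ge0 : 0 <= K by rewrite mulr_ge0 ?expR_ge0 ?mulr_ge0 ?ltW.
apply: le_trans (_ : \sum_(ik : 'I_n * 'I_n) K <= _); last first.
  by rewrite sumr_const card_prod card_ord mulr_natl.
rewrite -(ler_nat R) natr_sum in cn_le; apply: le_trans cn_le _.
rewrite big_mkcond; apply: ler_sum => ik _; case: ifP => // /eqP ikn.
by rewrite /K -[in leRHS]ikn; apply: join_term_le.
Qed.

Lemma eventually_le_nlnn (A L D eps : R) : 0 < eps ->
  \forall n \near \oo, A * ln n%:R + L + D * n%:R <= eps * (n%:R * ln n%:R).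
Proof.
move=> eps_gt0; near=> n.
have ln_ge : Num.max 1 (3 * D / eps) <= ln n%:R.
  near: n; have [N _ NE] := nbhs_infty_ger (expR (Num.max 1 (3 * D / eps))).
  exists N => // n /NE expn; have n_gt0 : 0 < n%:R :> R := lt_le_trans (expR_gt0 _) expn.
  by rewrite -[leLHS]expRK ler_ln ?posrE ?expR_gt0.
have n_ge : Num.max (3 * A / eps) (3 * L / eps) <= n%:R by near: n; apply: nbhs_infty_ger.
move: ln_ge n_ge; rewrite !ge_max !ler_pdivrMr // => /andP[ln_ge1 ln_geD] /andP[n_geA n_geL].
have n_ge0 : 0 <= n%:R :> R by [].
have neps_ge0 : 0 <= n%:R * eps by rewrite mulr_ge0 // ltW.
have hA : A * ln n%:R * 3 <= eps * n%:R * ln n%:R by nra.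
have hL : L * 3 <= eps * n%:R * ln n%:R by nra.
have hD : D * n%:R * 3 <= eps * n%:R * ln n%:R by nra.
lra.
Unshelve. all: by end_near.
Qed.

Lemma growth_rate_upper c (C k : R) (d : nat) : 0 < C -> 0 <= k ->
  (forall n, (c n)%:R <= (n * n)%:R * (C * expR (k * (n.+1%:R * ln n%:R) + (d * n)%:R))) ->
  forall eps, 0 < eps -> \forall n \near \oo, growth_rate c n <= k + eps.
Proof.
move=> C_gt0 k_ge0 c_le eps eps_gt0.
near=> n.
have one_lt_n : (1 < n)%N by near: n; exists 2.
have nlnn_gt0 := natr_mul_ln_gt0 one_lt_n.
rewrite /growth_rate ler_pdivrMr //.
have [c0|c_gt0] := posnP (c n).
  by rewrite c0 ln0 // mulr_ge0 ?(ltW nlnn_gt0) // addr_ge0 // ltW.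
have n_gt0 : 0 < n%:R :> R by rewrite ltr0n ltnW.
have ln_cn : ln (c n)%:R <= 2 * ln n%:R + ln C + (k * (n.+1%:R * ln n%:R) + (d * n)%:R).
  have cn_le := c_le n.
  rewrite -ler_ln ?posrE ?ltr0n // in cn_le; last first.
    by rewrite !mulr_gt0 ?expR_gt0 // natrM mulr_gt0.
  apply: le_trans cn_le _.
  by rewrite natrM !lnM ?posrE ?mulr_gt0 ?expR_gt0 // expRK; lra.
have small : (2 + k) * ln n%:R + ln C + d%:R * n%:R <= eps * (n%:R * ln n%:R).
  by near: n; apply: eventually_le_nlnn.
rewrite natrM -natr1 in ln_cn; lra.
Unshelve. all: by end_near.
Qed.

Lemma growth_rate_join a b c (d : nat) (b1 b2 : R) :
  growth_rate a @ \oo --> b1 -> growth_rate b @ \oo --> b2 ->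
  (forall n, a n <= c n)%N -> (forall n, b n <= c n)%N ->
  (forall n, c n <= \sum_(ik : 'I_n * 'I_n | ik.1.+1 * ik.2.+1 == n)
                      a ik.1.+1 * b ik.2.+1 * ik.1.+1 ^ (ik.2.+1 * d))%N ->
  growth_rate c @ \oo --> Num.max b1 b2.
Proof.
move=> ab bb ac bc c_le; apply/cvgrPdist_le => eps eps_gt0.
have M_ge0 : 0 <= Num.max b1 b2 by rewrite le_max (growth_rate_lim_ge0 ab).
pose k := Num.max b1 b2 + eps / 2.
have M_lt_k : Num.max b1 b2 < k by rewrite /k ltrDl divr_gt0.
have b1k : b1 < k by apply: le_lt_trans M_lt_k; rewrite le_max lexx.
have b2k : b2 < k by apply: le_lt_trans M_lt_k; rewrite le_max lexx orbT.
have [CA CA_gt0 aC] := growth_rate_expR_bound ab b1k.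
have [CB CB_gt0 bC] := growth_rate_expR_bound bb b2k.
have k_ge0 : 0 <= k := le_trans M_ge0 (ltW M_lt_k).
have upper := growth_rate_upper (mulr_gt0 CA_gt0 CB_gt0) k_ge0
  (fun n => join_sum_le k_ge0 CA_gt0 CB_gt0 aC bC (c_le n))
  (divr_gt0 eps_gt0 (ltr0n R 2)).
near=> n; rewrite ler_distlC; apply/andP; split.
  rewrite lerBlDr ge_max; apply/andP; split; rewrite -lerBlDr.
    apply: (le_trans _ (ler_growth_rate (ac n))); apply: ltW.
    by near: n; apply: (cvgr_gt _ ab); rewrite ltrBlDr ltrDl.
  apply: (le_trans _ (ler_growth_rate (bc n))); apply: ltW.
  by near: n; apply: (cvgr_gt _ bb); rewrite ltrBlDr ltrDl.
have -> : Num.max b1 b2 + eps = k + eps / 2 by rewrite /k; lra.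
by near: n; apply: upper.
Unshelve. all: by end_near.
Qed.

End GrowthRate.

Section ConnectImage.
Local Close Scope classical_set_scope.
Variables (T T' : finType) (r : rel T) (r' : rel T') (f : T -> T').

Lemma homo_connect : {homo f : x y / r x y >-> r' x y} ->
  {homo f : x y / connect r x y >-> connect r' x y}.
Proof.
move=> f_homo x y /connectP [p xp ->]; elim: p x xp => [|z p IH] x /=; first by rewrite connect0.
by case/andP => /f_homo xz zp; apply: connect_trans (connect1 xz) (IH _ zp).
Qed.

Lemma connect_image : (forall x z, r' (f x) z -> exists2 y, z = f y & r x y) ->
  forall x z, connect r' (f x) z -> exists2 y, z = f y & connect r x y.
Proof.
move=> f_lift x z /connectP [p xp ->]; elim: p x xp => [|w p IH] x /=.
  by move=> _; exists x => //; apply: connect0.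
case/andP => /f_lift [y -> xy] yp; have [y' -> yy'] := IH _ yp.
by exists y' => //; apply: connect_trans (connect1 xy) yy'.
Qed.

End ConnectImage.

Section InducedImage.
Local Close Scope classical_set_scope.
Variables (W V : finType) (e' : rel W) (e : rel V) (f : W -> V).
Hypotheses (f_inj : injective f) (f_adj : forall x y, e (f x) (f y) = e' x y).
Variable S : {set W}.

Lemma induced_rel_imset x y : induced_rel e (f @: S) (f x) (f y) = induced_rel e' S x y.
Proof. by rewrite /induced_rel !mem_imset // f_adj. Qed.

Lemma component_imset x : component e (f @: S) (f x) = f @: component e' S x.
Proof.
apply/setP => z; apply/idP/imsetP => [|[y]]; last first.
  rewrite inE => /andP [yS xy] ->; rewrite inE mem_imset // yS /=.
  by move: xy; apply: homo_connect => u w; rewrite induced_rel_imset.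
rewrite inE => /andP [zS xz].
have [y zE xy] : exists2 y, z = f y & connect (induced_rel e' S) x y.
  apply: (connect_image _ xz) => u w uw; have /and3P [_ /imsetP [y _ wE] _] := uw.
  by exists y => //; rewrite -induced_rel_imset -wE.
by exists y => //; rewrite inE xy andbT -(mem_imset _ _ f_inj) -zE.
Qed.

Lemma components_imset :
  components e (f @: S) = (fun C : {set W} => f @: C) @: components e' S.
Proof. by rewrite /components -!imset_comp; apply: eq_imset => x /=; apply: component_imset. Qed.

Lemma weight_imset (R : realType) : weight R e (f @: S) = weight R e' S.
Proof.
rewrite /weight components_imset big_imset /=; last by move=> A B _ _; apply: imset_inj.
by apply: eq_bigr => C _; rewrite card_imset.
Qed.

Lemma clique_collection_imset : clique_collection e (f @: S) = clique_collection e' S.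
Proof.
rewrite /clique_collection components_imset; apply/forall_inP/forall_inP.
  move=> cliques C CS; apply/forall_inP => x xC; apply/forall_inP => y yC.
  have /forall_inP /(_ _ (imset_f f xC)) := cliques _ (imset_f _ CS).
  by move=> /forall_inP /(_ _ (imset_f f yC)); rewrite (inj_eq f_inj) f_adj.
move=> cliques _ /imsetP [C CS ->]; apply/forall_inP => _ /imsetP [x xC ->].
apply/forall_inP => _ /imsetP [y yC ->]; rewrite (inj_eq f_inj) f_adj.
by move: (cliques C CS) => /forall_inP /(_ x xC) /forall_inP; apply.
Qed.

End InducedImage.

Section Gamma.
Local Close Scope classical_set_scope.
Variable R : realType.

Lemma weight_le_gamma (V : finType) (e : rel V) (S : {set V}) :
  clique_collection e S -> weight R e S <= gamma R e.
Proof. by move=> ccS; apply: (le_bigmax_cond _ (P := clique_collection e)). Qed.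

Lemma gamma_le (V : finType) (e : rel V) (x : R) : 0 <= x ->
  (forall S, clique_collection e S -> weight R e S <= x) -> gamma R e <= x.
Proof. by move=> x_ge0 wx; apply: bigmax_le. Qed.

Lemma gamma_ge0 (V : finType) (e : rel V) : 0 <= gamma R e.
Proof.
have cc0 : clique_collection e finset.set0 by apply/forall_inP => C; rewrite /components imset0 inE.
by have := weight_le_gamma cc0; rewrite /weight /components imset0 big_set0.
Qed.

Lemma gamma_ge1 (V : finType) (e : rel V) : simple_graph e -> ~ complete_graph e ->
  1 <= gamma R e.
Proof.
move=> [e_sym e_irr] /existsNP [x /existsNP [y /not_implyP [xy /negP exy]]].
pose S := [set x; y].
have component1 u : u \in S -> component e S u = [set u].
  move=> uS; apply/setP => z; rewrite !inE; apply/andP/eqP => [[_ /connectP [[|w p] //]]|->].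
    move=> /= /andP [/and3P [_ wS uw] _]; exfalso; move: uS wS uw; rewrite !inE.
    by case/orP => /eqP -> /orP [] /eqP ->; rewrite ?e_irr // ?(negbTE exy) // e_sym (negbTE exy).
  by split; [move: uS; rewrite !inE | apply: connect0].
have SE : components e S = [set [set x]; [set y]].
  by rewrite /components imsetU1 imset_set1 !component1 // !inE eqxx ?orbT.
have ccS : clique_collection e S.
  apply/forall_inP => C; rewrite SE !inE => /orP [] /eqP ->;
  by apply/forall_inP => u /set1P -> ; apply/forall_inP => v /set1P ->; rewrite eqxx.
apply: le_trans (weight_le_gamma ccS); rewrite /weight SE big_setU1 /=; last first.
  by rewrite inE; apply/eqP => /setP /(_ x); rewrite !inE eqxx (negbTE xy).
by rewrite big_set1 !cards1 expr1; lra.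
Qed.

Lemma setsum_cases (T1 T2 : finType) (S : {set T1 + T2}) :
  [\/ exists a b, inl a \in S /\ inr b \in S,
      S = inl @: [set a | inl a \in S] |
      S = inr @: [set b | inr b \in S]].
Proof.
have [[a Sa]|nl] := pselect (exists a, inl a \in S).
  have [[b Sb]|nr] := pselect (exists b, inr b \in S); first by constructor 1; exists a, b.
  constructor 2; apply/setP => -[x|x]; first by rewrite mem_imset ?inE //; apply: inl_inj.
  by apply/idP/imsetP => [Sx|[y]] //; exfalso; apply: nr; exists x.
constructor 3; apply/setP => -[x|x]; last by rewrite mem_imset ?inE //; apply: inr_inj.
by apply/idP/imsetP => [Sx|[y]] //; exfalso; apply: nl; exists x.
Qed.

Variables (V1 V2 : finType) (e1 : rel V1) (e2 : rel V2).
Local Notation e := (join_rel e1 e2).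
Let inl_adj x y : e (inl x) (inl y) = e1 x y. Proof. by []. Qed.
Let inr_adj x y : e (inr x) (inr y) = e2 x y. Proof. by []. Qed.

Lemma components_join_mixed (S : {set V1 + V2}) a b :
  inl a \in S -> inr b \in S -> components e S = [set S].
Proof.
move=> Sa Sb.
have edge x y : x \in S -> y \in S -> e x y -> connect (induced_rel e S) x y.
  by move=> Sx Sy exy; apply: connect1; rewrite /induced_rel Sx Sy.
have componentE x : x \in S -> component e S x = S.
  move=> Sx; apply/setP => y; rewrite inE; apply/andP/idP => [[]//|Sy]; split => //.
  case: x Sx => x Sx; case: y Sy => y Sy; try exact: edge.
    exact: connect_trans (edge _ _ Sx Sb isT) (edge _ _ Sb Sy isT).
  exact: connect_trans (edge _ _ Sx Sa isT) (edge _ _ Sa Sy isT).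
apply/setP => C; rewrite inE; apply/imsetP/eqP => [[x Sx ->]|->]; first exact: componentE.
by exists (inl a); rewrite ?componentE.
Qed.

Lemma weight_join_mixed (S : {set V1 + V2}) a b :
  inl a \in S -> inr b \in S -> weight R e S <= 1.
Proof.
move=> Sa Sb; rewrite /weight (components_join_mixed Sa Sb) big_set1.
by rewrite lerBlDr lerDl invr_ge0 exprn_ge0.
Qed.

Lemma gamma_join_ge : Num.max (gamma R e1) (gamma R e2) <= gamma R e.
Proof.
rewrite ge_max; apply/andP; split; apply: gamma_le (gamma_ge0 _) _ => S ccS.
  rewrite -(weight_imset (@inl_inj V1 V2) inl_adj); apply: weight_le_gamma.
  by rewrite (clique_collection_imset (@inl_inj V1 V2) inl_adj).
rewrite -(weight_imset (@inr_inj V1 V2) inr_adj); apply: weight_le_gamma.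
by rewrite (clique_collection_imset (@inr_inj V1 V2) inr_adj).
Qed.

Lemma gamma_join_le : simple_graph e1 -> simple_graph e2 ->
  ~ complete_graph e1 \/ ~ complete_graph e2 ->
  gamma R e <= Num.max (gamma R e1) (gamma R e2).
Proof.
move=> g1 g2 noncomplete; apply: gamma_le; first by rewrite le_max gamma_ge0.
move=> S ccS; case: (setsum_cases S) => [[a [b [Sa Sb]]]|SE|SE].
- apply: le_trans (weight_join_mixed Sa Sb) _; rewrite le_max.
  by case: noncomplete => /gamma_ge1 -> //; rewrite ?orbT.
- rewrite SE (weight_imset (@inl_inj V1 V2) inl_adj) le_max weight_le_gamma //.
  by rewrite -(clique_collection_imset (@inl_inj V1 V2) inl_adj) -SE.
- rewrite SE (weight_imset (@inr_inj V1 V2) inr_adj) le_max weight_le_gamma ?orbT //.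
  by rewrite -(clique_collection_imset (@inr_inj V1 V2) inr_adj) -SE.
Qed.

End Gamma.

Theorem mainTheorem3 (R : realType) (V1 V2 : finType) (e1 : rel V1) (e2 : rel V2)
  (b1 b2 : R) :
  simple_graph e1 -> simple_graph e2 ->
  0 < b1 -> 0 < b2 ->
  (fun n : nat => ln ((s_n e1 n)%:R : R) / (n%:R * ln (n%:R : R))) @ \oo --> b1 ->
  (fun n : nat => ln ((s_n e2 n)%:R : R) / (n%:R * ln (n%:R : R))) @ \oo --> b2 ->
  ((fun n : nat => ln ((s_n (join_rel e1 e2) n)%:R : R) / (n%:R * ln (n%:R : R)))
     @ \oo --> Num.max b1 b2) /\
  (~ complete_graph e1 \/ ~ complete_graph e2 ->
     gamma R (join_rel e1 e2) = Num.max (gamma R e1) (gamma R e2)).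
Proof.
move=> g1 g2 _ _ s1_rate s2_rate; split.
  apply: (growth_rate_join s1_rate s2_rate (s_n_join_l e1 e2) (s_n_join_r e1 e2)).
  exact: s_n_join_le.
by move=> noncomplete; apply/eqP; rewrite eq_le gamma_join_le // gamma_join_ge.
Qed.
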